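(* Let $n\geq 2$, $1\leq k\leq n-1$, $w=w_1\cdots w_n\in\mathfrak{S}_n$, and let $i<j$ with $w_i\cdots w_j$ a $k$-up. Let $i\leq i'<j'\leq j$ be such that $w_{i'}\cdots w_{j'}$ is a $k$-up with $j'-i'$ minimal among all $k$-ups $w_{a}\cdots w_{b}$ with $i\le a<b\le j$. Then $w_{i'}\cdots w_{j'}$ is a $k$-ascending section.
   Context: $\mathfrak{S}_n$ is the set of permutations $w=w_1\cdots w_n$ of $\{1,\dots,n\}$. A section of $w$ is a consecutive block $w_sw_{s+1}\cdots w_t$ ($s\le t$). A section $w_s\cdots w_t$ is a $k$-up if $s<t$ and $w_t-w_s\geq k$, and a $k$-down if $s<t$ and $w_s-w_t\geq k$. A $k$-down ''in'' the section $w_a\cdots w_b$ means a $k$-down $w_s\cdots w_t$ with $a\leq s<t\leq b$. A section $w_i\cdots w_j$ with $i<j$ is $k$-ascending if: $w_i=\min\{w_i,\dots,w_j\}$ and $w_j=\max\{w_i,\dots,w_j\}$; $w_j-w_i\geq k$; and there is no $k$-down in $w_i\cdots w_j$. *)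

From mathcomp Require Import all_boot all_order all_fingroup.
Set Implicit Arguments. Unset Strict Implicit. Unset Printing Implicit Defensive.

(* Permutations of {1..n} are represented as w : 'S_n, permutations of 'I_n
   = {0,..,n-1}; positions and values are shifted by one (0-indexed), which
   does not affect differences w_t - w_s. *)

Definition wv n (w : 'S_n) (i : 'I_n) : nat := val (w i).

Definition kup n (k : nat) (w : 'S_n) (s t : 'I_n) : Prop :=
  (s < t)%N /\ (wv w s + k <= wv w t)%N.

Definition kdown n (k : nat) (w : 'S_n) (s t : 'I_n) : Prop :=
  (s < t)%N /\ (wv w t + k <= wv w s)%N.

Definition kascending n (k : nat) (w : 'S_n) (i j : 'I_n) : Prop :=
  (i < j)%N /\
  (forall l : 'I_n, (i <= l <= j)%N -> wv w i <= wv w l <= wv w j)%N /\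
  (wv w i + k <= wv w j)%N /\
  ~ (exists s t : 'I_n, [/\ (i <= s)%N, (t <= j)%N & kdown k w s t]).

From mathcomp Require Import all_boot all_order all_fingroup.
From mathcomp Require Import zify.

(* A shortest k-up contains no other k-up.  If some w_l inside it were
   below w_i' (resp. above w_j'), then w_l ... w_j' (resp. w_i' ... w_l)
   would be a strictly shorter k-up; and a k-down w_s ... w_t inside it
   would give w_s >= w_t + k >= w_i' + k, so w_i' ... w_s would be one. *)

Section MinimalKup.

Variables (n k : nat) (w : 'S_n).

Definition kup_minimal (i j : 'I_n) : Prop :=
  forall a b : 'I_n, (i <= a)%N -> (b <= j)%N -> kup k w a b -> a = i /\ b = j.

Lemma shortest_kup_minimal (i j i' j' : 'I_n) :
  (i <= i')%N -> (j' <= j)%N ->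
  (forall a b : 'I_n, (i <= a)%N -> (a < b)%N -> (b <= j)%N -> kup k w a b ->
     (j' - i' <= b - a)%N) ->
  kup_minimal i' j'.
Proof.
move=> le_ii' le_j'j shortest a b le_i'a le_bj' kup_ab.
have [lt_ab _] := kup_ab.
have le_len := shortest a b (leq_trans le_ii' le_i'a) lt_ab
  (leq_trans le_bj' le_j'j) kup_ab.
by split; apply: val_inj => /=; lia.
Qed.

Variables (i j : 'I_n).
Hypotheses (kup_ij : kup k w i j) (minimal_ij : kup_minimal i j).

Lemma kup_minimal_ge_first (l : 'I_n) :
  (i <= l <= j)%N -> (wv w i <= wv w l)%N.
Proof.
case/andP=> le_il le_lj; rewrite leqNgt; apply/negP=> lt_li.
have [_ up_ij] := kup_ij.
have lt_lj : (l < j)%N.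
  by rewrite ltn_neqAle le_lj andbT; apply: contraTneq lt_li => /val_inj ->; lia.
have up_lj : (wv w l + k <= wv w j)%N by lia.
have [eq_li _] := minimal_ij l j le_il (leqnn j) (conj lt_lj up_lj).
by rewrite eq_li ltnn in lt_li.
Qed.

Lemma kup_minimal_le_last (l : 'I_n) :
  (i <= l <= j)%N -> (wv w l <= wv w j)%N.
Proof.
case/andP=> le_il le_lj; rewrite leqNgt; apply/negP=> lt_jl.
have [_ up_ij] := kup_ij.
have lt_il : (i < l)%N.
  by rewrite ltn_neqAle le_il andbT; apply: contraTneq lt_jl => /val_inj <-; lia.
have up_il : (wv w i + k <= wv w l)%N by lia.
have [_ eq_lj] := minimal_ij i l (leqnn i) le_lj (conj lt_il up_il).
by rewrite eq_lj ltnn in lt_jl.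
Qed.

Hypothesis k_gt0 : (0 < k)%N.

Lemma kup_minimal_no_kdown :
  ~ (exists s t : 'I_n, [/\ (i <= s)%N, (t <= j)%N & kdown k w s t]).
Proof.
case=> s [t [le_is le_tj [lt_st down]]].
have ge_t : (wv w i <= wv w t)%N.
  by apply: kup_minimal_ge_first; apply/andP; split; lia.
have lt_is : (i < s)%N.
  by rewrite ltn_neqAle le_is andbT; apply: contraTneq down => /val_inj <-; lia.
have up_is : (wv w i + k <= wv w s)%N by lia.
have [_ eq_sj] := minimal_ij i s (leqnn i) (ltnW (leq_trans lt_st le_tj))
  (conj lt_is up_is).
by move: lt_st le_tj; rewrite eq_sj; lia.
Qed.

Lemma kup_minimal_kascending : kascending k w i j.
Proof.
have [lt_ij up_ij] := kup_ij.
split=> //; split.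
  by move=> l hl; rewrite kup_minimal_ge_first ?kup_minimal_le_last.
by split; [exact: up_ij | exact: kup_minimal_no_kdown].
Qed.

End MinimalKup.

Theorem lemma2p5 (n k : nat) (w : 'S_n) (i j i' j' : 'I_n) :
  (2 <= n)%N -> (1 <= k)%N -> (k <= n - 1)%N ->
  (i < j)%N -> kup k w i j ->
  (i <= i')%N -> (i' < j')%N -> (j' <= j)%N -> kup k w i' j' ->
  (forall a b : 'I_n, (i <= a)%N -> (a < b)%N -> (b <= j)%N -> kup k w a b ->
     (j' - i' <= b - a)%N) ->
  kascending k w i' j'.
Proof.
move=> _ k_gt0 _ _ _ le_ii' _ le_j'j kup_i'j' shortest.
apply: kup_minimal_kascending => //.
exact: shortest_kup_minimal le_ii' le_j'j shortest.
Qed.
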